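(* Let $p\ge 1$. (1) For $n\ge1$ and $x_1,\dots,x_n\in\mathbb{R}$, the map $t\mapsto s_p^p(x_1,\dots,x_n,t)$ is convex, decreasing on $\mathbb{R}_-$ and increasing on $\mathbb{R}_+$. (2) For $n\ge 1$ and $x_1,\dots,x_{n+1}\in\mathbb{R}$, $s_p^p(x_1,\dots,x_{n+1})-s_p^p(x_1,\dots,x_n)\ge|x_{n+1}|^p$ in all cases, and $\ge p|x_n|^{p-1}|x_{n+1}|$ if $x_{n+1}$ and $x_n$ have the same sign. (3) Symmetrically, the map $t\mapsto s_p^p(t,x_1,\dots,x_n)$ is convex, decreasing on $\mathbb{R}_-$ and increasing on $\mathbb{R}_+$, and for $x_0,x_1,\dots,x_n\in\mathbb{R}$, $s_p^p(x_0,x_1,\dots,x_n)-s_p^p(x_1,\dots,x_n)\ge|x_0|^p$ in all cases and $\ge p|x_1|^{p-1}|x_0|$ if $x_0$ and $x_1$ have the same sign.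
   Context: For a finite real sequence $x=(x_1,\dots,x_n)$, the maximal $p$-sum is $s_p(x)=\big(\sup_{k\le n}\sup_{0=i_0<\dots<i_k=n}\sum_{j=0}^{k-1}\big|\sum_{\ell=i_j+1}^{i_{j+1}}x_\ell\big|^p\big)^{1/p}$. *)

From HB Require Import structures.
From mathcomp Require Import all_boot all_order all_algebra.
From mathcomp Require Import all_classical all_reals.
From mathcomp Require Import exp.
Set Implicit Arguments. Unset Strict Implicit. Unset Printing Implicit Defensive.
Import Order.TTheory GRing.Theory Num.Theory.
Local Open Scope ring_scope.
Local Open Scope classical_set_scope.

(* A partition 0 = i_0 < i_1 < ... < i_k = n of {1..n} into consecutive
   nonempty blocks is encoded by the list of block lengths
   r = [:: i_1 - i_0; ...; i_k - i_(k-1)] (all positive, summing to n). *)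
Definition is_partition (n : nat) (r : seq nat) : bool :=
  all (fun l => 0 < l)%N r && (sumn r == n).

Definition psum {R : realType} (p : R) (x : seq R) (r : seq nat) : R :=
  \sum_(b <- reshape r x) `| \sum_(y <- b) y | `^ p.

Definition sp_pow {R : realType} (p : R) (x : seq R) : R :=
  sup [set v | exists r, is_partition (size x) r /\ v = psum p x r].

Definition s_p {R : realType} (p : R) (x : seq R) : R := sp_pow p x `^ p^-1.

Definition convex_fun {R : realType} (f : R -> R) : Prop :=
  forall a b (l : R), 0 <= l <= 1 ->
    f (l * a + (1 - l) * b) <= l * f a + (1 - l) * f b.

Definition decr_neg {R : realType} (f : R -> R) : Prop :=
  forall a b : R, a <= b -> b <= 0 -> f b <= f a.

Definition incr_pos {R : realType} (f : R -> R) : Prop :=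
  forall a b : R, 0 <= a -> a <= b -> f a <= f b.

From HB Require Import structures.
From mathcomp Require Import all_boot all_order all_algebra.
From mathcomp Require Import all_classical all_reals.
From mathcomp Require Import interval_inference exp convex hoelder.
From mathcomp Require Import ring lra zify.
Import Order.TTheory GRing.Theory Num.Theory.
Local Open Scope ring_scope.

(* The supremum defining [s_p^p] is a maximum over the finitely many partitions.
   For [x ++ [:: t]] only the last block of a partition depends on [t], through
   [|S + t|^p] with [S] the sum of the rest of the block; this is convex in [t],
   hence so is the maximum. Appending [0] does not change [s_p^p], while appending
   [t] as a block of its own adds [|t|^p], so the convex function is minimal at [0].
   For the tangent bound take an optimal partition of [x] with last block
   [s ++ [:: x_n]]: not splitting off [x_n] is optimal, i.e.
   [|S|^p + |x_n|^p <= |S + x_n|^p], which forces [S] and [x_n] to have the same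
   sign. Appending [y] of that sign to this block raises [|S + x_n|^p] by at least
   [p |S + x_n|^(p-1) |y| >= p |x_n|^(p-1) |y|]. Part (3) is the mirror image under
   [rev], which leaves [s_p] invariant. *)

Section norm_facts.
Context {R : realDomainType}.

Lemma normD_mul_ge0 {a b : R} : 0 <= a * b -> `|a + b| = `|a| + `|b|.
Proof.
move=> ab; have [a0|a0] := lerP 0 a; have [b0|b0] := lerP 0 b.
all: rewrite ?(ger0_norm a0) ?(ltr0_norm a0) ?(ger0_norm b0) ?(ltr0_norm b0).
- by rewrite ger0_norm ?addr_ge0.
- have -> : a = 0 by apply/le_anti; rewrite a0 andbT; nra.
  by rewrite !add0r ltr0_norm.
- have -> : b = 0 by apply/le_anti; rewrite b0 andbT; nra.
  by rewrite !addr0 ltr0_norm.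
- by rewrite ltr0_norm ?opprD // ltr_nDl.
Qed.

Lemma normD_le_max {a b : R} : a * b < 0 -> `|a + b| <= Num.max `|a| `|b|.
Proof.
move=> ab; rewrite le_max.
have [a0|a0] := lerP 0 a; have [b0|b0] := lerP 0 b; have [s0|s0] := lerP 0 (a + b).
all: rewrite ?(ger0_norm a0) ?(ltr0_norm a0) ?(ger0_norm b0) ?(ltr0_norm b0).
all: rewrite ?(ger0_norm s0) ?(ltr0_norm s0).
all: apply/orP; first [left; nra | right; nra | exfalso; nra].
Qed.

End norm_facts.

Section powR_facts.
Context {R : realType} {p : R}.
Hypothesis p_ge1 : 1 <= p.

Let p_gt0 : 0 < p. Proof. exact: lt_le_trans ltr01 p_ge1. Qed.

Lemma powR_norm_convex (l a b : R) : 0 <= l <= 1 ->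
  `|l * a + (1 - l) * b| `^ p <= l * `|a| `^ p + (1 - l) * `|b| `^ p.
Proof.
move=> /andP[l0 l1]; have l1' : 0 <= 1 - l by rewrite subr_ge0.
have := convex_powR p_ge1 (Itv01 l0 l1) (x:=`|a|) (y:=`|b|).
rewrite !inE /= !in_itv /= !andbT !normr_ge0 => /(_ isT isT).
rewrite convRE => /(le_trans _); apply.
change (conv _ _ _) with (l * `|a| + (1 - l) * `|b|).
apply: ge0_ler_powR; rewrite ?nnegrE ?(ltW p_gt0) ?addr_ge0 ?mulr_ge0 //.
by apply: le_trans (ler_normD _ _) _; rewrite !normrM !(ger0_norm l0) (ger0_norm l1').
Qed.

(* Young's inequality [x u^(p-1) <= x^p / p + u^p (p-1) / p] at [x = a + h], [u = a]. *)
Lemma powR_increment_ge {a h : R} : 0 <= a -> 0 <= h ->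
  p * a `^ (p - 1) * h <= (a + h) `^ p - a `^ p.
Proof.
move=> a0 h0; have ah0 : 0 <= a + h by rewrite addr_ge0.
have [->|p_neq1] := eqVneq p 1.
  by rewrite subrr powRr0 !powRr1 //; lra.
have p_gt1 : 1 < p by rewrite lt_neqAle eq_sym p_neq1 p_ge1.
have pm1_gt0 : 0 < p - 1 by rewrite subr_gt0.
pose q := p / (p - 1).
have q_gt0 : 0 < q by rewrite divr_gt0.
have pq : p^-1 + q^-1 = 1.
  by rewrite /q invf_div -{1}(div1r p) -mulrDl subrKC mulfV // gt_eqF.
have := conjugate_powR ah0 (powR_ge0 a (p - 1)) p_gt0 q_gt0 pq.
rewrite -powRrM (_ : (p - 1) * q = p); last by rewrite /q mulrCA mulfV ?mulr1 // gt_eqF.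
rewrite /q invf_div -(ler_pM2l p_gt0) => young.
have e : p * (a `^ (p - 1) * a) = p * a `^ p by rewrite (mulrC _ a) mulr_powRB1.
have e' : p * ((a + h) `^ p / p + a `^ p * ((p - 1) / p)) =
          (a + h) `^ p + (p - 1) * a `^ p by field; rewrite gt_eqF.
lra.
Qed.

Lemma powR_superadd_mul_ge0 {c d : R} : d != 0 ->
  `|c| `^ p + `|d| `^ p <= `|c + d| `^ p -> 0 <= c * d.
Proof.
move=> d0 superadd; rewrite leNgt; apply/negP => cd_lt0.
have c0 : c != 0 by apply: contraTneq cd_lt0 => ->; rewrite mul0r ltxx.
have powc_gt0 : 0 < `|c| `^ p by rewrite powR_gt0 ?normr_gt0.
have powd_gt0 : 0 < `|d| `^ p by rewrite powR_gt0 ?normr_gt0.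
have := normD_le_max cd_lt0; rewrite le_max => /orP[] le_norm.
all: have := ge0_ler_powR (ltW p_gt0) (normr_ge0 _) (normr_ge0 _) le_norm; lra.
Qed.

Lemma powR_block_increment {c d y : R} : d != 0 -> 0 <= c * d -> 0 <= d * y ->
  p * `|d| `^ (p - 1) * `|y| <= `|c + d + y| `^ p - `|c + d| `^ p.
Proof.
move=> d0 cd dy.
have dd : 0 < d ^+ 2 by rewrite exprn_even_gt0.
have cdy : 0 <= (c + d) * y by nra.
rewrite (normD_mul_ge0 cdy).
apply: le_trans (powR_increment_ge (normr_ge0 (c + d)) (normr_ge0 y)).
rewrite ler_wpM2r // ler_wpM2l ?(ltW p_gt0) //.
apply: ge0_ler_powR; rewrite ?nnegrE ?subr_ge0 //.
by rewrite (normD_mul_ge0 cd) lerDr.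
Qed.

End powR_facts.

Lemma exists_argmax_seq {d} {T : orderType d} {I : eqType} (f : I -> T) {s : seq I} :
  s != [::] -> exists2 i, i \in s & forall j, j \in s -> (f j <= f i)%O.
Proof.
elim: s => [//|i s IH] _.
have [->|s_nnil] := eqVneq s [::].
  by exists i => [|j]; rewrite ?mem_seq1 // => /eqP->.
have [k k_in k_max] := IH s_nnil.
have [ik|ki] := leP (f i) (f k).
- exists k; first by rewrite inE k_in orbT.
  by move=> j; rewrite inE => /predU1P[->|/k_max].
- exists i; first by rewrite inE eqxx.
  by move=> j; rewrite inE => /predU1P[->//|/k_max jk]; rewrite (le_trans jk) ?ltW.
Qed.

Lemma is_partition_sumn {n r} : is_partition n r -> sumn r = n.
Proof. by case/andP=> _ /eqP. Qed.

Lemma is_partition_rcons n r l : (0 < l)%N ->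
  is_partition (n + l) (rcons r l) = is_partition n r.
Proof. by move=> l_gt0; rewrite /is_partition all_rcons l_gt0 sumn_rcons eqn_add2r. Qed.

Lemma is_partition_rev n r : is_partition n (rev r) = is_partition n r.
Proof. by rewrite /is_partition all_rev sumn_rev. Qed.

Lemma partitions_finite n :
  exists L : seq (seq nat), forall r, is_partition n r -> r \in L.
Proof.
suff [L HL] : exists L : seq (seq nat),
    forall r, all (fun l => 0 < l)%N r -> (sumn r <= n)%N -> r \in L.
  by exists L => r /andP[r_pos /eqP r_sum]; rewrite HL ?r_sum.
elim: n => [|n [L HL]].
  by exists [:: [::]] => -[|k r] //= /andP[k_gt0 _]; rewrite leqn0 addn_eq0 eqn0Ngt k_gt0.
exists (L ++ [seq k :: r | k <- iota 1 n.+1, r <- L]) => r r_pos r_sum.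
rewrite mem_cat; have [/(HL _ r_pos)->//|sum_gt] := leqP (sumn r) n.
case: r r_pos r_sum sum_gt => [//|k r]; rewrite [all _ _]/= [sumn _]/=.
move=> /andP[k_gt0 r_pos] r_sum sum_gt.
apply/orP; right; apply/allpairsP; exists (k, r); split=> //.
  by rewrite mem_iota /=; lia.
by apply: HL => //=; lia.
Qed.

Lemma is_partition_exists n : exists r, is_partition n r.
Proof. by case: n => [|n]; [exists [::] | exists [:: n.+1]; rewrite /is_partition /= addn0]. Qed.

Section psum.
Context {R : realType}.
Variable p : R.

Lemma psum_ge0 x r : 0 <= psum p x r.
Proof. by rewrite /psum sumr_ge0 // => b _; rewrite powR_ge0. Qed.

Lemma psum_rcons x r l : (sumn r + l = size x)%N ->
  psum p x (rcons r l) =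
  psum p (take (sumn r) x) r + `|\sum_(y <- drop (sumn r) x) y| `^ p.
Proof. by move=> e; rewrite /psum reshape_rcons // big_rcons. Qed.

Lemma psum_cat_block s1 s2 r : sumn r = size s1 ->
  psum p (s1 ++ s2) (rcons r (size s2)) = psum p s1 r + `|\sum_(y <- s2) y| `^ p.
Proof. by move=> e; rewrite psum_rcons e ?size_cat // take_size_cat // drop_size_cat. Qed.

Lemma psum_rev x r : sumn r = size x -> psum p (rev x) (rev r) = psum p x r.
Proof.
move=> e; rewrite /psum -[in RHS]big_rev rev_reshape ?e // big_map.
by apply: eq_bigr => b _; rewrite big_rev.
Qed.

Lemma psum_last_block {x r} : is_partition (size x) r -> x != [::] ->
  exists r1 s1 s2, [/\ is_partition (size s1) r1, x = s1 ++ s2, s2 != [::] &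
    psum p x r = psum p s1 r1 + `|\sum_(y <- s2) y| `^ p].
Proof.
move=> r_part x_nnil; case/lastP: r r_part => [|r1 l] r_part.
  by move: x_nnil; rewrite -size_eq0 -(is_partition_sumn r_part).
have /andP[] := r_part; rewrite all_rcons sumn_rcons => /andP[l_gt0 r1_pos] /eqP sum_x.
have size_s1 : size (take (sumn r1) x) = sumn r1 by rewrite size_takel // -sum_x leq_addr.
have size_s2 : size (drop (sumn r1) x) = l by rewrite size_drop -sum_x addKn.
exists r1, (take (sumn r1) x), (drop (sumn r1) x); split.
- by rewrite /is_partition r1_pos size_s1 eqxx.
- by rewrite cat_take_drop.
- by rewrite -size_eq0 size_s2 -lt0n.
- by rewrite psum_rcons.
Qed.

Lemma psum_rcons_last_block {x t r} : is_partition (size (rcons x t)) r ->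
  exists r1 s1 s2, [/\ is_partition (size s1) r1, x = s1 ++ s2 &
    psum p (rcons x t) r = psum p s1 r1 + `|\sum_(y <- s2) y + t| `^ p].
Proof.
move=> r_part; have xt_nnil : rcons x t != [::] by rewrite -size_eq0 size_rcons.
have [r1 [s1 [s2 [r1_part xt_eq s2_nnil ->]]]] := psum_last_block r_part xt_nnil.
case/lastP: s2 xt_eq s2_nnil => [//|s2 u]; rewrite -rcons_cat => /rcons_inj[-> ->] _.
by exists r1, s1, s2; rewrite big_rcons.
Qed.

End psum.

Section sp_pow.
Context {R : realType}.
Variable p : R.

Lemma sp_pow_max x : exists r0, [/\ is_partition (size x) r0,
  sp_pow p x = psum p x r0 &
  forall r, is_partition (size x) r -> psum p x r <= psum p x r0].
Proof.
have [L HL] := partitions_finite (size x).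
have [r r_part] := is_partition_exists (size x).
have parts_nnil : [seq r <- L | is_partition (size x) r] != [::].
  by apply/eqP => /(congr1 (fun s => r \in s)); rewrite mem_filter r_part HL.
have [r0] := exists_argmax_seq (psum p x) parts_nnil.
rewrite mem_filter => /andP[r0_part _] r0_max.
have {}r0_max r' : is_partition (size x) r' -> psum p x r' <= psum p x r0.
  by move=> r'_part; rewrite r0_max // mem_filter r'_part HL.
exists r0; split=> //; apply/le_anti/andP; split.
- by apply: ge_sup; [exists (psum p x r0), r0 | move=> _ [r' [/r0_max ? ->]]].
- apply: ub_le_sup; last by exists r0.
  by exists (psum p x r0) => _ [r' [/r0_max ? ->]].
Qed.

Lemma psum_le_sp_pow x r : is_partition (size x) r -> psum p x r <= sp_pow p x.
Proof. by have [r0 [_ -> r0_max]] := sp_pow_max x; apply: r0_max. Qed.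

Lemma sp_pow_ge0 x : 0 <= sp_pow p x.
Proof. by have [r0 [_ -> _]] := sp_pow_max x; apply: psum_ge0. Qed.

Lemma powR_s_p x : 0 < p -> s_p p x `^ p = sp_pow p x.
Proof. by move=> p_gt0; rewrite -powRrM mulVf ?gt_eqF // powRr1 // sp_pow_ge0. Qed.

Lemma sp_pow_rev x : sp_pow p (rev x) = sp_pow p x.
Proof.
suff sp_rev_le y : sp_pow p (rev y) <= sp_pow p y.
  by apply/le_anti; rewrite sp_rev_le -{1}(revK x) sp_rev_le.
have [r [r_part -> _]] := sp_pow_max (rev y).
rewrite -(revK r) psum_rev; last by rewrite sumn_rev (is_partition_sumn r_part) size_rev.
by apply: psum_le_sp_pow; rewrite is_partition_rev -(size_rev y).
Qed.

End sp_pow.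

Section convex_min.
Context {R : realType}.
Implicit Types f : R -> R.

Lemma convex_le_scale f a l : convex_fun f -> f 0 <= f a -> 0 <= l <= 1 ->
  f (l * a) <= f a.
Proof.
move=> f_cvx f0a /[dup] l01 /andP[_ l1].
have := f_cvx a 0 l l01; rewrite mulr0 addr0 => /le_trans; apply.
have : (1 - l) * f 0 <= (1 - l) * f a by rewrite ler_wpM2l ?subr_ge0.
lra.
Qed.

Lemma convex_decr_neg_incr_pos {f} : convex_fun f -> (forall t, f 0 <= f t) ->
  decr_neg f /\ incr_pos f.
Proof.
move=> f_cvx f_min; split=> [a b ab b_le0 | a b a_ge0 ab].
- have [a0|a_lt0] := eqVneq a 0.
    by have -> : b = 0 by apply/le_anti; rewrite b_le0 -a0.
  have {}a_lt0 : a < 0 by rewrite lt_neqAle a_lt0 (le_trans ab b_le0).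
  rewrite -[b](mulfVK (ltr0_neq0 a_lt0)) convex_le_scale //.
  by rewrite ler_ndivlMr // mul0r ler_ndivrMr // mul1r b_le0 ab.
- have [b0|b_gt0] := eqVneq b 0.
    by have -> : a = 0 by apply/le_anti; rewrite a_ge0 -b0 ab.
  have {}b_gt0 : 0 < b by rewrite lt_neqAle eq_sym b_gt0 (le_trans a_ge0 ab).
  rewrite -[a](mulfVK (lt0r_neq0 b_gt0)) convex_le_scale //.
  by rewrite ler_pdivrMr // mul1r ab divr_ge0 // ltW.
Qed.

End convex_min.

Section append.
Context {R : realType}.
Variable p : R.
Hypothesis p_ge1 : 1 <= p.

Let p_gt0 : 0 < p. Proof. exact: lt_le_trans ltr01 p_ge1. Qed.

Lemma psum_add_block_le {s1 r} s2 : is_partition (size s1) r ->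
  psum p s1 r + `|\sum_(y <- s2) y| `^ p <= sp_pow p (s1 ++ s2).
Proof.
move=> r_part; have [->|s2_nnil] := eqVneq s2 [::].
  by rewrite big_nil normr0 powR0 ?gt_eqF // addr0 cats0 psum_le_sp_pow.
rewrite -psum_cat_block ?(is_partition_sumn r_part) //; apply: psum_le_sp_pow.
by rewrite size_cat is_partition_rcons // lt0n size_eq0.
Qed.

Lemma sp_pow_rcons_ge x y : sp_pow p x + `|y| `^ p <= sp_pow p (rcons x y).
Proof.
have [r [r_part -> _]] := sp_pow_max p x.
by have := psum_add_block_le [:: y] r_part; rewrite big_seq1 cats1.
Qed.

Lemma sp_pow_rcons0 x : sp_pow p (rcons x 0) = sp_pow p x.
Proof.
apply/le_anti/andP; split; last first.
  by have := sp_pow_rcons_ge x 0; rewrite normr0 powR0 ?gt_eqF // addr0.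
have [r [r_part -> _]] := sp_pow_max p (rcons x 0).
have [r1 [s1 [s2 [r1_part -> ->]]]] := psum_rcons_last_block p r_part.
by rewrite addr0 psum_add_block_le.
Qed.

Lemma sp_pow_rcons_convex x : convex_fun (fun t => sp_pow p (rcons x t)).
Proof.
move=> a b l l01 /=; have /andP[l0 l1] := l01.
have [r [r_part -> _]] := sp_pow_max p (rcons x (l * a + (1 - l) * b)).
have [r1 [s1 [s2 [r1_part -> ->]]]] := psum_rcons_last_block p r_part.
have := psum_add_block_le (rcons s2 a) r1_part.
have := psum_add_block_le (rcons s2 b) r1_part.
rewrite !big_rcons /= -!rcons_cat; set S := \sum_(y <- s2) y => le_b le_a.
have -> : S + (l * a + (1 - l) * b) = l * (S + a) + (1 - l) * (S + b) by ring.
have := powR_norm_convex p_ge1 l (S + a) (S + b) l01.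
have := ler_wpM2l l0 le_a.
have := ler_wpM2l (eqbRL (subr_ge0 l 1) l1) le_b.
lra.
Qed.

Lemma sp_pow_rcons_convex_mono x :
  let f := fun t => sp_pow p (rcons x t) in
  [/\ convex_fun f, decr_neg f & incr_pos f].
Proof.
have f_cvx := sp_pow_rcons_convex x.
have [] // := convex_decr_neg_incr_pos f_cvx => t.
by rewrite /= sp_pow_rcons0 (le_trans _ (sp_pow_rcons_ge x t)) // lerDl powR_ge0.
Qed.

Lemma sp_pow_rcons_increment x y : 0 <= last 0 x * y ->
  sp_pow p x + p * `|last 0 x| `^ (p - 1) * `|y| <= sp_pow p (rcons x y).
Proof.
move=> xy; have [xn0|xn_neq0] := eqVneq (last 0 x) 0.
  rewrite xn0 normr0 (le_trans _ (sp_pow_rcons_ge x y)) // lerD2l.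
  (* [0 `^ 0 = 1], so the bound is [|y|] rather than [0] when [p = 1]. *)
  have [->|p_neq1] := eqVneq p 1; first by rewrite subrr powRr0 powRr1 // !mul1r.
  by rewrite powR0 ?subr_eq0 // mulr0 mul0r powR_ge0.
case/lastP: x xy xn_neq0 => [|x xn]; first by rewrite eqxx.
rewrite last_rcons => xy xn_neq0.
have [r [r_part sp_x _]] := sp_pow_max p (rcons x xn).
have [r1 [s1 [s2 [r1_part x_eq psum_r]]]] := psum_rcons_last_block p r_part.
rewrite {}psum_r {}x_eq in sp_x *; rewrite sp_x.
set c := \sum_(y <- s2) y in sp_x *.
have superadd : `|c| `^ p + `|xn| `^ p <= `|c + xn| `^ p.
  have := sp_pow_rcons_ge (s1 ++ s2) xn; have := psum_add_block_le s2 r1_part.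
  rewrite sp_x; lra.
have := powR_block_increment p_ge1 xn_neq0 (powR_superadd_mul_ge0 p_ge1 xn_neq0 superadd) xy.
have := psum_add_block_le (rcons (rcons s2 xn) y) r1_part.
rewrite !big_rcons /= -!rcons_cat; lra.
Qed.

Lemma sp_pow_rcons_sub_ge x y :
  sp_pow p (rcons x y) - sp_pow p x >= `|y| `^ p /\
  (0 <= last 0 x * y ->
     sp_pow p (rcons x y) - sp_pow p x >= p * `|last 0 x| `^ (p - 1) * `|y|).
Proof.
split; last by move=> /sp_pow_rcons_increment; rewrite lerBrDl.
by rewrite lerBrDl sp_pow_rcons_ge.
Qed.

End append.

Theorem proposition2p2 (R : realType) (p : R) (hp : 1 <= p) :
  (* (1) *)
  (forall x : seq R, (0 < size x)%N ->
     let f := fun t => s_p p (rcons x t) `^ p in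
     [/\ convex_fun f, decr_neg f & incr_pos f]) /\
  (* (2) *)
  (forall (x : seq R) (y : R), (0 < size x)%N ->
     s_p p (rcons x y) `^ p - s_p p x `^ p >= `|y| `^ p /\
     (0 <= last 0 x * y ->
        s_p p (rcons x y) `^ p - s_p p x `^ p
          >= p * `|last 0 x| `^ (p - 1) * `|y|)) /\
  (* (3) *)
  (forall x : seq R, (0 < size x)%N ->
     let f := fun t => s_p p (t :: x) `^ p in
     [/\ convex_fun f, decr_neg f & incr_pos f]) /\
  (forall (x : seq R) (x0 : R), (0 < size x)%N ->
     s_p p (x0 :: x) `^ p - s_p p x `^ p >= `|x0| `^ p /\
     (0 <= x0 * head 0 x ->
        s_p p (x0 :: x) `^ p - s_p p x `^ p
          >= p * `|head 0 x| `^ (p - 1) * `|x0|)).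
Proof.
have spE x : s_p p x `^ p = sp_pow p x by rewrite powR_s_p // (lt_le_trans ltr01 hp).
have cons_rev t x : sp_pow p (t :: x) = sp_pow p (rcons (rev x) t).
  by rewrite -sp_pow_rev rev_cons.
split; [|split; [|split]].
- move=> x _ f; rewrite (_ : f = fun t => sp_pow p (rcons x t)).
    exact: sp_pow_rcons_convex_mono.
  by apply: funext => t; rewrite /f spE.
- by move=> x y _; rewrite !spE; apply: sp_pow_rcons_sub_ge.
- move=> x _ f; rewrite (_ : f = fun t => sp_pow p (rcons (rev x) t)).
    exact: sp_pow_rcons_convex_mono.
  by apply: funext => t; rewrite /f spE cons_rev.
- move=> x x0 _; rewrite !spE cons_rev -(sp_pow_rev p x) mulrC.
  have -> : head 0 x = last 0 (rev x) by case: x => [|a s] //; rewrite rev_cons last_rcons.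
  exact: sp_pow_rcons_sub_ge.
Qed.
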